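(* Let $b_1,\dots,b_n$ be nonnegative integers with $\sum_{i=1}^n b_i\ge n-1$. Then for every Nash equilibrium of $(b_1,\dots,b_n)$-BG, in either the MAX or the SUM version, the underlying graph $U(G)$ of its realization $G$ is connected.
   Context: Bounded budget network creation game $(b_1,\dots,b_n)$-BG: $n$ players with integer budgets $0\le b_i\le n-1$. A strategy of player $i$ is a set $S_i\subseteq\{1,\dots,n\}\setminus\{i\}$ with $|S_i|=b_i$; a profile is realized by the directed graph $G$ on $u_1,\dots,u_n$ with an arc $\overrightarrow{u_iu_j}$ iff $j\in S_i$. $U(G)$ is the undirected multigraph obtained by ignoring directions. $\operatorname{dist}(u,v)$ is the distance in $U(G)$, defined as $n^2$ between different components. SUM cost: $c_{SUM}(u)=\sum_v\operatorname{dist}(u,v)$; MAX cost: $c_{MAX}(u)=\max_v\operatorname{dist}(u,v)+(\kappa-1)n^2$, $\kappa$ the number of components of $U(G)$. A Nash equilibrium (in a version) is a profile in which no player can decrease its cost (of that version) by changing its own strategy while the others are fixed. *)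

From mathcomp Require Import all_boot.
Set Implicit Arguments. Unset Strict Implicit. Unset Printing Implicit Defensive.

(* Players are u_0, ..., u_{n-1}, indexed by 'I_n.  A strategy profile assigns
   to each player i the set S i of players it buys arcs to. *)
Definition profile (n : nat) := 'I_n -> {set 'I_n}.

Definition valid_profile n (b : 'I_n -> nat) (S : profile n) : Prop :=
  forall i : 'I_n, i \notin S i /\ #|S i| = b i.

Definition adjU n (S : profile n) : rel 'I_n :=
  fun u v => (v \in S u) || (u \in S v).

Fixpoint ballU n (S : profile n) (k : nat) (u : 'I_n) : {set 'I_n} :=
  match k with
  | 0 => [set u]
  | k'.+1 => ballU S k' u :|: [set v | [exists w in ballU S k' u, adjU S w v]]
  end.

(* Distance in U(G): least k with v in ball k u (any finite distance is < n),
   and n^2 between different components. *)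
Definition distU n (S : profile n) (u v : 'I_n) : nat :=
  let k := find (fun k => v \in ballU S k u) (iota 0 n) in
  if k < n then k else n ^ 2.

Definition ncompU n (S : profile n) : nat :=
  #|[set [set v | connect (adjU S) u v] | u : 'I_n]|.

Definition cost_SUM n (S : profile n) (u : 'I_n) : nat :=
  \sum_(v : 'I_n) distU S u v.

Definition cost_MAX n (S : profile n) (u : 'I_n) : nat :=
  \max_(v : 'I_n) distU S u v + (ncompU S - 1) * n ^ 2.

Inductive version := MAXv | SUMv.

Definition cost (ver : version) n (S : profile n) (u : 'I_n) : nat :=
  match ver with MAXv => cost_MAX S u | SUMv => cost_SUM S u end.

Definition deviate n (S : profile n) (i : 'I_n) (T : {set 'I_n}) : profile n :=
  fun j => if j == i then T else S j.

Definition nash_eq (ver : version) n (b : 'I_n -> nat) (S : profile n) : Prop :=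
  valid_profile b S /\
  forall (i : 'I_n) (T : {set 'I_n}), i \notin T -> #|T| = b i ->
    cost ver S i <= cost ver (deviate S i T) i.

Definition connectedU n (S : profile n) : Prop :=
  forall u v : 'I_n, connect (adjU S) u v.

From mathcomp Require Import all_boot zify.
Set Implicit Arguments. Unset Strict Implicit. Unset Printing Implicit Defensive.

(* Suppose U(G) is disconnected.  A BFS spanning forest of U(G) has n minus the
   number of components, hence at most n - 2, arcs, while the players own at
   least n - 1 arcs, so some player i owns an arc (i, j) outside the forest.
   Redirecting it from j to a vertex w of another component keeps every forest
   arc, hence every old connection, and joins i to the component of w.  In the
   SUM version the distance from i to w drops from n^2 to below n while each
   other distance grows by less than n; in the MAX version one component
   disappears, which saves n^2.  Either way i strictly improves. *)

Section Distance.
Variables (n : nat) (S : profile n).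
Local Notation e := (adjU S).

Lemma adjU_sym : symmetric e.
Proof. by move=> x y; rewrite /adjU orbC. Qed.

Lemma connectU_sym : connect_sym e.
Proof. exact: sym_connect_sym adjU_sym. Qed.

Lemma mem_ballU_connect k u v : v \in ballU S k u -> connect e u v.
Proof.
elim: k v => [|k IH] v /=; first by rewrite inE => /eqP ->.
rewrite !inE => /orP[/IH // | /existsP[w /andP[/IH uw wv]]].
exact: connect_trans uw (connect1 wv).
Qed.

Lemma path_last_ballU u p : path e u p -> last u p \in ballU S (size p) u.
Proof.
elim/last_ind: p => [|p y IH] /=; first by rewrite inE.
rewrite rcons_path last_rcons size_rcons /= => /andP[/IH up e_py].
by rewrite !inE; apply/orP; right; apply/existsP; exists (last u p); rewrite up.
Qed.

Lemma connect_ballU u v : connect e u v -> exists2 k, k < n & v \in ballU S k u.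
Proof.
move/connectP=> [p /shortenP[q eq uq _] ->]; exists (size q).
  by have := max_card (mem (u :: q)); rewrite card_ord (card_uniqP uq).
exact: path_last_ballU.
Qed.

Lemma distU_connect u v :
  connect e u v -> distU S u v < n /\ v \in ballU S (distU S u v) u.
Proof.
case/connect_ballU=> k lt_kn kv; rewrite /distU.
set P := fun k => v \in ballU S k u.
have hasP : has P (iota 0 n) by apply/hasP; exists k; rewrite ?mem_iota.
have lt_find : find P (iota 0 n) < n by rewrite -[n in _ < n](size_iota 0) -has_find.
by rewrite lt_find; split=> //; have := nth_find 0 hasP; rewrite nth_iota.
Qed.

Lemma distU_min k u v : v \in ballU S k u -> distU S u v <= k.
Proof.
move=> kv; have [lt_dn _] := distU_connect (mem_ballU_connect kv).
move: lt_dn; rewrite /distU; case: ifP => [lt_find _ | _]; last by nia.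
rewrite leqNgt; apply/negP => lt_kd.
by have := before_find 0 lt_kd; rewrite nth_iota ?(ltn_trans lt_kd) // kv.
Qed.

Lemma distU_nconnect u v : ~~ connect e u v -> distU S u v = n ^ 2.
Proof.
move=> nuv; rewrite /distU; case: ifP => // lt_find.
have hasP : has (fun k => v \in ballU S k u) (iota 0 n) by rewrite has_find size_iota.
have := nth_find 0 hasP; rewrite nth_iota // => /mem_ballU_connect.
by rewrite (negbTE nuv).
Qed.

Lemma distU_le u v : distU S u v <= n ^ 2.
Proof.
have n_gt0 : 0 < n by apply: leq_ltn_trans (ltn_ord u).
by rewrite /distU; case: ifP => // lt_find; nia.
Qed.

Lemma distU_pred u v :
  connect e u v -> u != v -> exists2 w, e w v & distU S u w < distU S u v.
Proof.
move=> uv neq_uv; have [_] := distU_connect uv.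
case dK: (distU S u v) => [|K] /=; first by rewrite inE eq_sym (negbTE neq_uv).
rewrite inE => /orP[/distU_min | ]; first by rewrite dK ltnn.
by rewrite inE => /existsP[w /andP[Kw wv]]; exists w; rewrite // ltnS distU_min.
Qed.

End Distance.

Definition arcs n (S : profile n) : {set 'I_n * 'I_n} := [set a | a.2 \in S a.1].

Lemma card_arcs n (S : profile n) : #|arcs S| = \sum_(i < n) #|S i|.
Proof.
rewrite -sum1dep_card (eq_bigr (fun i => \sum_(j in S i) 1)) => [|i _].
  by rewrite pair_big_dep; apply: eq_bigl => a.
by rewrite sum1_card.
Qed.

(* Each non-root vertex gets the arc joining it to a parent one step closer to
   its root: these arcs form a BFS spanning forest of U(G). *)
Section SpanningForest.
Variables (n : nat) (S : profile n).
Local Notation e := (adjU S).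

Definition depth v := distU S (root e v) v.

Definition parent v :=
  odflt v [pick w | e w v && (distU S (root e v) w < depth v)].

Lemma parent_spec v :
  ~~ roots e v -> e (parent v) v /\ depth (parent v) < depth v.
Proof.
move=> nroot_v.
have rv : connect e (root e v) v by rewrite connectU_sym connect_root.
have [w wv lt_w] := distU_pred rv nroot_v.
rewrite /parent; case: pickP => [p /andP[pv lt_p] | /(_ w)]; last by rewrite wv lt_w.
suff eq_root : root e p = root e v by rewrite /depth eq_root.
exact/(rootP (connectU_sym S))/connect1.
Qed.

Definition tree_arc v :=
  if v \in S (parent v) then (parent v, v) else (v, parent v).

Definition tree_arcs := [set tree_arc v | v in [set v | ~~ roots e v]].

Lemma tree_arcs_sub : {subset tree_arcs <= arcs S}.
Proof.
move=> a /imsetP[v]; rewrite inE => /parent_spec[pv _] ->; rewrite /tree_arc inE.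
by case: ifP pv => //= notin_v; rewrite /adjU notin_v.
Qed.

Lemma tree_arcK :
  {in [set v | ~~ roots e v],
    cancel tree_arc (fun a => if depth a.1 < depth a.2 then a.2 else a.1)}.
Proof.
move=> v; rewrite inE => /parent_spec[_ lt_pv].
by rewrite /tree_arc; case: (v \in _) => /=; rewrite ?lt_pv // ltnNge ltnW.
Qed.

Lemma card_tree_arcs : #|tree_arcs| = #|[set v | ~~ roots e v]|.
Proof. exact/card_in_imset/can_in_inj/tree_arcK. Qed.

Lemma connect_tree_arcs (S' : profile n) :
  {subset tree_arcs <= arcs S'} -> subrel (connect e) (connect (adjU S')).
Proof.
move=> sub_arcs.
have root_v v : connect (adjU S') (root e v) v.
  elim: {v}(depth v).+1 {-2}v (ltnSn (depth v)) => // d IH v lt_vd.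
  have [/eqP -> // | nroot_v] := boolP (roots e v).
  have [pv lt_pv] := parent_spec nroot_v.
  have -> : root e v = root e (parent v).
    exact/esym/(rootP (connectU_sym S))/connect1.
  apply: connect_trans (IH _ (leq_trans lt_pv lt_vd)) (connect1 _).
  have /sub_arcs : tree_arc v \in tree_arcs by rewrite imset_f ?inE.
  by rewrite /tree_arc /adjU inE; case: ifP => _ /= ->; rewrite ?orbT.
move=> x y /(rootP (connectU_sym S)) eq_root.
have x_root : connect (adjU S') x (root e x) by rewrite connectU_sym root_v.
by apply: connect_trans x_root _; rewrite eq_root root_v.
Qed.

(* A forest with at least two trees has at most n - 2 arcs. *)
Lemma exists_nontree_arc u v :
  n - 1 <= #|arcs S| -> ~~ connect e u v ->
  exists2 a, a \in arcs S & a \notin tree_arcs.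
Proof.
move=> arcs_ge nuv.
have two_roots : 2 <= #|[set x | roots e x]|.
  have neq_r : root e u != root e v by rewrite (root_connect (connectU_sym S)).
  have <- : #|[set root e u; root e v]| = 2 by rewrite cards2 neq_r.
  apply: subset_leq_card.
  apply/subsetP=> x; rewrite !inE => /orP[] /eqP ->;
    by rewrite (roots_root (connectU_sym S)).
have nroots_le : #|[set x | ~~ roots e x]| + 2 <= n.
  have := cardsC [set x | roots e x]; rewrite card_ord.
  have -> : ~: [set x | roots e x] = [set x | ~~ roots e x].
    by apply/setP=> x; rewrite !inE.
  by lia.
have : ~~ (arcs S \subset tree_arcs).
  by apply/negP=> /subset_leq_card; rewrite card_tree_arcs; lia.
by case/subsetPn=> a; exists a.
Qed.

End SpanningForest.

Lemma card_classes_merge (T : finType) (e e' : rel T) x y :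
  connect_sym e' -> subrel (connect e) (connect e') ->
  ~~ connect e x y -> connect e' x y ->
  #|[set [set v | connect e' u v] | u : T]| <
  #|[set [set v | connect e u v] | u : T]|.
Proof.
move=> sym' sub nxy xy'.
pose f (A : {set T}) := [set v | [exists u in A, connect e' u v]].
have f_class u : f [set v | connect e u v] = [set v | connect e' u v].
  apply/setP=> v; rewrite !inE; apply/existsP/idP => [[w /andP[]] | uv].
    by rewrite inE => /sub uw; apply: connect_trans.
  by exists u; rewrite inE connect0.
have -> : [set [set v | connect e' u v] | u : T] =
          f @: [set [set v | connect e u v] | u : T].
  by rewrite -imset_comp; apply: eq_imset => u; rewrite /= f_class.
rewrite ltn_neqAle leq_imset_card andbT; apply/negP => /imset_injP f_inj.
have eq_class : [set v | connect e x v] = [set v | connect e y v].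
  apply: f_inj; rewrite ?imset_f // !f_class.
  apply/setP=> v; rewrite !inE; apply/idP/idP; apply: connect_trans => //.
  by rewrite sym'.
by move: nxy; have := connect0 e y; rewrite -inE -eq_class inE => ->.
Qed.

Section Merge.
Variables (n : nat) (S S' : profile n) (u w : 'I_n).
Hypothesis connect_sub : subrel (connect (adjU S)) (connect (adjU S')).
Hypothesis nconnect_uw : ~~ connect (adjU S) u w.
Hypothesis connect_uw' : connect (adjU S') u w.

Lemma distU_merge x : distU S' u x < distU S u x + n.
Proof.
have n_gt0 : 0 < n by apply: leq_ltn_trans (ltn_ord u).
have [ux | nux] := boolP (connect (adjU S) u x).
  by have [lt_n _] := distU_connect (connect_sub ux); rewrite ltn_addl.
by rewrite (distU_nconnect nux); have := distU_le S' u x; lia.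
Qed.

(* cost_MAX S' u <= ncompU S' * n^2 <= (ncompU S - 1) * n^2 < cost_MAX S u. *)
Lemma cost_MAX_merge : cost_MAX S' u < cost_MAX S u.
Proof.
have lt_comp : ncompU S' < ncompU S.
  exact: card_classes_merge (connectU_sym S') connect_sub nconnect_uw connect_uw'.
have comp_gt0 : 0 < ncompU S'.
  rewrite card_gt0; apply/set0Pn.
  by exists [set v | connect (adjU S') u v]; rewrite imset_f.
have max_le : \max_v distU S' u v <= n ^ 2.
  by apply/bigmax_leqP => v _; apply: distU_le.
have max_ge : n ^ 2 <= \max_v distU S u v.
  by rewrite -(distU_nconnect nconnect_uw); apply: leq_bigmax.
have n_gt0 : 0 < n by apply: leq_ltn_trans (ltn_ord u).
rewrite /cost_MAX; move: lt_comp comp_gt0 max_le max_ge.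
move: (ncompU S') (ncompU S) (\max_v distU S' u v) (\max_v distU S u v).
by nia.
Qed.

Lemma cost_SUM_merge : cost_SUM S' u < cost_SUM S u.
Proof.
rewrite /cost_SUM (bigD1 w) //= [X in _ < X](bigD1 w) //= (distU_nconnect nconnect_uw).
have [dw _] := distU_connect connect_uw'.
have : \sum_(v | v != w) distU S' u v <= \sum_(v | v != w) (distU S u v + (n - 1)).
  by apply: leq_sum => v _; have := distU_merge v; lia.
rewrite big_split /= sum_nat_cond_const.
have : #|[set v | v != w]| <= n by rewrite -[n in _ <= n]card_ord max_card.
move: dw (#|[set v | v != w]|).
move: (\sum_(v | v != w) distU S' u v) (\sum_(v | v != w) distU S u v).
by nia.
Qed.

Lemma cost_merge ver : cost ver S' u < cost ver S u.
Proof. by case: ver; [apply: cost_MAX_merge | apply: cost_SUM_merge]. Qed.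

End Merge.

Section Swap.
Variables (n : nat) (S : profile n) (i j w : 'I_n).
Hypotheses (iSi : i \notin S i) (jSi : j \in S i).
Hypotheses (wSi : w \notin S i) (neq_wi : w != i).

Lemma swap_valid : i \notin w |: (S i :\ j) /\ #|w |: (S i :\ j)| = #|S i|.
Proof.
split; first by rewrite !inE negb_or eq_sym neq_wi negb_and iSi orbT.
by rewrite cardsU1 !inE (negbTE wSi) andbF (cardsD1 j (S i)) jSi.
Qed.

Lemma arcs_swap :
  {subset arcs S :\ (i, j) <= arcs (deviate S i (w |: (S i :\ j)))}.
Proof.
move=> [x y]; rewrite !inE /deviate /= xpair_eqE.
by case: eqP => [-> | _] //=; rewrite !inE => ->; rewrite orbT.
Qed.

Lemma connect_swap : connect (adjU (deviate S i (w |: (S i :\ j)))) i w.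
Proof. by apply: connect1; rewrite /adjU /deviate eqxx !inE eqxx. Qed.

End Swap.

Theorem mainTheorem13 (n : nat) (b : 'I_n -> nat)
  (hb : forall i, b i <= n - 1)
  (hsum : n - 1 <= \sum_(i < n) b i)
  (ver : version) (S : profile n) :
  nash_eq ver b S -> connectedU S.
Proof.
move=> [valid nash] x y; apply/negPn/negP => nxy.
have arcs_ge : n - 1 <= #|arcs S|.
  by rewrite card_arcs (eq_bigr b) // => i _; have [_ ->] := valid i.
have [[i j] ij_arc nontree] := exists_nontree_arc arcs_ge nxy.
have [w niw] : exists w, ~~ connect (adjU S) i w.
  have [ix | nix] := boolP (connect (adjU S) i x); last by exists x.
  by exists y; apply: contra nxy; apply: connect_trans; rewrite connectU_sym.
have wSi : w \notin S i by apply: contra niw => wSi; rewrite connect1 // /adjU wSi.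
have neq_wi : w != i by apply: contraNneq niw => ->.
have [iSi cardSi] := valid i.
have jSi : j \in S i by move: ij_arc; rewrite inE.
have [iT cardT] := swap_valid iSi jSi wSi neq_wi.
have keep : {subset tree_arcs S <= arcs (deviate S i (w |: (S i :\ j)))}.
  move=> a ta; apply: arcs_swap; rewrite in_setD1 (tree_arcs_sub ta) andbT.
  by apply: contraNneq nontree => <-.
have := nash i _ iT (etrans cardT cardSi); apply/negP; rewrite -ltnNge.
by apply: (cost_merge (connect_tree_arcs keep) niw); apply: connect_swap.
Qed.
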